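(* Let $X$ and $\Lambda$ be nonempty sets, $x^0\in X$, $f: X\to\mathbb{R}$, and $(f_\lambda)_{\lambda\in\Lambda}$ a family of real-valued functions on $X$ such that the feasible set $X_0:=\{x\in X:\ \sup_{\lambda\in\Lambda}f_\lambda(x)\le0\}$ is nonempty and $(f_\lambda(x))_{\lambda\in\Lambda}\in\ell^\infty(\Lambda)$ for every $x\in X$. Assume the family $(f_\lambda)_{\lambda\in\Lambda}\cup(f-f(x^0))$ is infsup-convex on $X$ and the Slater condition holds: there exists $x^1\in X$ with $\sup_{\lambda\in\Lambda}f_\lambda(x^1)<0$. Then $x^0$ is an optimal solution of $\inf_{x\in X_0}f(x)$ (i.e. $x^0\in X_0$ and $f(x^0)=\inf_{x\in X_0}f(x)$) if and only if $x^0\in X_0$ and there exists $\Phi_0\in\ell^\infty(\Lambda)^*_+$ such that the function $x\mapsto f(x)+\Phi_0((f_\lambda(x))_{\lambda\in\Lambda})$ attains its infimum on $X$ at $x^0$ and $\Phi_0((f_\lambda(x^0))_{\lambda\in\Lambda})=0$.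
   Context: $\ell^\infty(\Lambda)$ is the Banach space of bounded real functions on $\Lambda$ (sup-norm), $\ell^\infty(\Lambda)^*_+$ the cone of positive continuous linear functionals on it. The family $(f_\lambda)_{\lambda\in\Lambda}\cup(f-f(x^0))$ is the family indexed by $\Lambda\cup\{\mu\}$ ($\mu\notin\Lambda$) whose $\mu$-th member is $f-f(x^0)$. With $\Delta_m:=\{\mathbf t\in\mathbb{R}^m: t_j\ge0,\sum t_j=1\}$, a family $(g_i)_{i\in I}$ of real functions on $X$ is infsup-convex on $X$ if for all $m\ge1$, $\mathbf{t}\in\Delta_m$, $x_1,\dots,x_m\in X$: $\inf_{x\in X}\sup_{i\in I}g_i(x)\le\sup_{i\in I}\sum_{j=1}^m t_j g_i(x_j)$. *)

From HB Require Import structures.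
From mathcomp Require Import all_boot all_order all_algebra.
From mathcomp Require Import all_classical all_reals ereal.
Set Implicit Arguments. Unset Strict Implicit. Unset Printing Implicit Defensive.
Import Order.TTheory GRing.Theory Num.Theory.
Local Open Scope classical_set_scope.
Local Open Scope ring_scope.
Local Open Scope ereal_scope.

Definition esupr {R : realType} {I : Type} (g : I -> R) : \bar R :=
  ereal_sup [set (g i)%:E | i in [set: I]].

Definition einf_on {R : realType} {X : Type} (A : set X) (h : X -> R) : \bar R :=
  ereal_inf [set (h x)%:E | x in A].

Local Close Scope ereal_scope.

Definition is_bounded {R : realType} {L : Type} (u : L -> R) : Prop :=
  exists M : R, forall l, `|u l| <= M.

(* Phi is (the restriction to l^oo(L) of) a positive continuous linear functional
   on l^oo(L) with the sup norm; values of Phi outside l^oo(L) are irrelevant. *)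
Definition pos_cont_lin_functional {R : realType} {L : Type}
    (Phi : (L -> R) -> R) : Prop :=
  [/\ (forall u v, is_bounded u -> is_bounded v -> Phi (u \+ v) = Phi u + Phi v),
      (forall (a : R) u, is_bounded u -> Phi (fun l => a * u l) = a * Phi u),
      (forall u, is_bounded u -> (forall l, 0 <= u l) -> 0 <= Phi u) &
      (exists C : R, forall u (M : R), is_bounded u -> (forall l, `|u l| <= M) ->
          `|Phi u| <= C * M)].

Definition infsup_convex {R : realType} {X I : Type} (g : I -> X -> R) : Prop :=
  forall (m : nat) (t : 'I_m -> R) (xs : 'I_m -> X),
    (0 < m)%N -> (forall j, 0 <= t j) -> \sum_(j < m) t j = 1 ->
    (ereal_inf [set esupr (fun i => g i x) | x in [set: X]] <=
       esupr (fun i => (\sum_(j < m) t j * g i (xs j))%R))%E.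

(* The family (f_lambda)_{lambda in L} ∪ (f - f x0), indexed by option L,
   with None playing the role of the extra index mu. *)
Definition join_family {R : realType} {X L : Type} (F : L -> X -> R)
    (f : X -> R) (x0 : X) : option L -> X -> R :=
  fun i x => match i with Some l => F l x | None => f x - f x0 end.

Definition feasible {R : realType} {X L : Type} (F : L -> X -> R) : set X :=
  [set x | (esupr (fun l => F l x) <= 0)%E].

From HB Require Import structures.
From mathcomp Require Import all_boot all_order all_algebra.
From mathcomp Require Import all_classical all_reals ereal.
From mathcomp Require Import ring lra.
Import Order.TTheory GRing.Theory Num.Theory.
Local Open Scope classical_set_scope.
Local Open Scope ring_scope.
Set Implicit Arguments.
Unset Strict Implicit.
Unset Printing Implicit Defensive.

(* Sufficiency only uses the positivity of Phi0. For necessity, encode x as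
   g x := ((f_l x)_l, f x - f x0) in the space of bounded functions on
   option L, on which p v := sup_i v i is sublinear. Optimality of x0 and
   infsup-convexity make p nonnegative on the convex cone K spanned by the
   g x. By Zorn's lemma the sublinear functional inf_(k in K) p (. + k) lies
   above a minimal sublinear functional, which is linear (Hahn-Banach); this
   gives a linear phi <= p with phi >= 0 on K. Such a phi is positive, the
   Slater point makes phi positive at the indicator of the objective
   coordinate None, and normalising phi restricted to l^oo(L) by that value
   gives Phi0. *)

Section sublinear.
Variables (R : realType) (U : lmodType R).

Record sublinear (p : U -> R) : Prop := Sublinear {
  sublinearD : forall u v, p (u + v) <= p u + p v;
  sublinearZ : forall a u, 0 < a -> p (a *: u) = a * p u }.

Lemma sublinear0 p : sublinear p -> p 0 = 0.
Proof.
by move=> [_ pZ]; have := pZ 2 0 (ltr0Sn R 1); rewrite scaler0; lra.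
Qed.

Lemma sublinearZ_ge0 p a u : sublinear p -> 0 <= a -> p (a *: u) = a * p u.
Proof.
move=> sp; rewrite le_eqVlt => /orP[/eqP <-|]; last exact: sublinearZ.
by rewrite scale0r mul0r sublinear0.
Qed.

Lemma sublinear_geN p u : sublinear p -> - p (- u) <= p u.
Proof.
move=> sp; have := sublinearD sp u (- u); rewrite subrr sublinear0 //; lra.
Qed.

Section inf_family.
Variables (J : Type) (D : set J) (p : J -> U -> R).
Hypothesis D_neq0 : D !=set0.
Hypothesis p_lbound : forall u, exists b, forall j, D j -> b <= p j u.
Hypothesis p_directed : forall i j u v, D i -> D j ->
  exists2 k, D k & p k (u + v) <= p i u + p j v.
Hypothesis p_scale : forall a i, 0 < a -> D i ->
  exists2 j, D j & forall u, p j (a *: u) = a * p i u.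

Let m u := inf [set p j u | j in D].

Lemma inf_family_le j u : D j -> m u <= p j u.
Proof.
move=> Dj; have [b hb] := p_lbound u; apply: ge_inf; last by exists j.
by exists b => _ [i Di <-]; exact: hb.
Qed.

Lemma le_inf_family c u : (forall j, D j -> c <= p j u) -> c <= m u.
Proof.
move=> hc; have [j Dj] := D_neq0; apply: lb_le_inf; first by exists (p j u), j.
by move=> _ [i Di <-]; exact: hc.
Qed.

Lemma sublinear_inf_family : sublinear m.
Proof.
split=> [u v|a u a0].
  suff : m (u + v) - m u <= m v by lra.
  apply: le_inf_family => j Dj.
  suff : m (u + v) - p j v <= m u by lra.
  apply: le_inf_family => i Di; have [k Dk hk] := p_directed u v Di Dj.
  have := inf_family_le (u + v) Dk; lra.
apply/le_anti/andP; split.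
  rewrite -ler_pdivrMl //; apply: le_inf_family => i Di.
  have [j Dj hj] := p_scale a0 Di; rewrite ler_pdivrMl // -hj.
  exact: inf_family_le.
apply: le_inf_family => j Dj.
have [i Di hi] : exists2 i, D i & forall w, p i (a^-1 *: w) = a^-1 * p j w.
  by apply: p_scale => //; rewrite invr_gt0.
have := inf_family_le u Di.
rewrite -[u in p i u](scalerK (lt0r_neq0 a0)) hi -(ler_pM2l a0) mulrA.
by rewrite divff ?gt_eqF // mul1r.
Qed.

End inf_family.

Lemma sublinear_inf_chain q (C : set (U -> R)) : sublinear q -> C !=set0 ->
  (forall p, C p -> sublinear p /\ forall u, p u <= q u) ->
  (forall p1 p2, C p1 -> C p2 ->
     (forall u, p1 u <= p2 u) \/ (forall u, p2 u <= p1 u)) ->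
  sublinear (fun u => inf [set p u | p in C]) /\
  forall p u, C p -> inf [set p u | p in C] <= p u.
Proof.
move=> sq C0 Cq Ctot.
have lb u : exists b, forall p, C p -> b <= p u.
  exists (- q (- u)) => p /Cq[sp pq].
  by apply: le_trans (sublinear_geN u sp); rewrite lerN2.
split; last by move=> p u Cp; exact: (inf_family_le (p := fun p u => p u)).
apply: (sublinear_inf_family (p := fun p u => p u)) => //.
  move=> p1 p2 u v C1 C2; have [[s1 _] [s2 _]] := (Cq _ C1, Cq _ C2).
  case: (Ctot _ _ C1 C2) => h; [exists p1 | exists p2] => //.
  - by apply: le_trans (sublinearD s1 u v) _; rewrite lerD2l.
  - by apply: le_trans (sublinearD s2 u v) _; rewrite lerD2r.
move=> a p a0 Cp; exists p => // u.
by case: (Cq _ Cp) => sp _; exact: sublinearZ.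
Qed.

Section descent.
Variables (p : U -> R) (v : U).
Hypothesis p_sub : sublinear p.

Definition descent (w : U) : R :=
  inf [set p (w + s *: v) - s * p v | s in [set s : R | 0 <= s]].

Let descent_lbound w :
  exists b, forall s, 0 <= s -> b <= p (w + s *: v) - s * p v.
Proof.
exists (- p (- w)) => s s0; rewrite -sublinearZ_ge0 //.
have := sublinearD p_sub (w + s *: v) (- w); rewrite addrC addKr; lra.
Qed.

Lemma sublinear_descent : sublinear descent.
Proof.
apply: sublinear_inf_family => //; first by exists 0 => /=.
  move=> s1 s2 w1 w2 /= s10 s20; exists (s1 + s2); first exact: addr_ge0.
  have -> : w1 + w2 + (s1 + s2) *: v = (w1 + s1 *: v) + (w2 + s2 *: v).
    by rewrite scalerDl addrACA.
  have := sublinearD p_sub (w1 + s1 *: v) (w2 + s2 *: v); lra.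
move=> a s a0 /= s0; exists (a * s); first by rewrite mulr_ge0 // ltW.
by move=> w; rewrite -scalerA -scalerDr sublinearZ //; ring.
Qed.

Lemma descent_le w : descent w <= p w.
Proof.
have := inf_family_le descent_lbound w (lexx 0).
by rewrite scale0r addr0 mul0r subr0.
Qed.

Lemma descent_le_shift w : descent w <= p (w + v) - p v.
Proof.
by have := inf_family_le descent_lbound w ler01; rewrite scale1r mul1r.
Qed.

End descent.

Lemma minimal_sublinear_additive p : sublinear p ->
  (forall p', sublinear p' -> (forall u, p' u <= p u) ->
     forall u, p u <= p' u) ->
  forall u v, p (u + v) = p u + p v.
Proof.
move=> sp pmin u v; apply/le_anti; rewrite sublinearD //=.
have := pmin _ (sublinear_descent v sp) (descent_le v sp) u.
have := descent_le_shift v sp u; lra.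
Qed.

Lemma additive_sublinear_linear p : sublinear p ->
  (forall u v, p (u + v) = p u + p v) -> linear_for *%R p.
Proof.
move=> sp pD a u v; rewrite pD; congr (_ + _).
have pN w : p (- w) = - p w.
  by have := pD w (- w); rewrite subrr sublinear0 //; lra.
have [a0|a0] := leP 0 a; first exact: sublinearZ_ge0.
rewrite -[a]opprK scaleNr -scalerN sublinearZ ?pN ?mulrN ?mulNr ?opprK //; lra.
Qed.

Theorem hahn_banach q :
  sublinear q -> exists mu : {scalar U}, forall u, mu u <= q u.
Proof.
move=> sq.
pose T := {p : U -> R | sublinear p /\ forall u, p u <= q u}.
pose le_T (p1 p2 : T) := `[< forall u, sval p2 u <= sval p1 u >].
pose top : T := exist _ q (conj sq (fun=> lexx _)).
have [|||[p [sp pq]] pmin] := @ZL_preorder T top le_T.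
- by move=> p; apply/asboolP.
- move=> p1 p2 p3 /asboolP h12 /asboolP h23; apply/asboolP => u.
  exact: le_trans (h23 u) (h12 u).
- move=> A Atot; have [[p0 A0]|A0] := pselect (A !=set0); last first.
    by exists top => p Ap; exfalso; apply: A0; exists p.
  pose C := [set sval p | p in A].
  have [sm mC] : sublinear (fun u => inf [set p u | p in C]) /\
      forall p u, C p -> inf [set p u | p in C] <= p u.
    apply: (sublinear_inf_chain sq); first by exists (sval p0), p0.
      by move=> _ [[p hp] _ <-].
    move=> _ _ [p1 A1 <-] [p2 A2 <-].
    by case: (Atot _ _ A1 A2) => /asboolP h; [right | left].
  have mq u : inf [set p u | p in C] <= q u.
    apply: le_trans (mC (sval p0) u _) _; first by exists p0.
    by case: (svalP p0) => _.
  exists (exist _ (fun u => inf [set p u | p in C]) (conj sm mq)) => p Ap.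
  by apply/asboolP => u /=; apply: mC; exists p.
have lin_p : linear_for *%R p.
  apply: additive_sublinear_linear => //.
  apply: minimal_sublinear_additive => // p' sp' p'p u.
  have := pmin (exist _ p' (conj sp' (fun w => le_trans (p'p w) (pq w)))).
  by move=> /(_ (asboolT p'p)) /asboolP; apply.
pose mu : {scalar U} := HB.pack p (GRing.isLinear.Build R U R *%R p lin_p).
by exists mu.
Qed.

Lemma hahn_banach_cone (P : U -> R) (K : set U) : sublinear P -> K 0 ->
  (forall u v, K u -> K v -> K (u + v)) ->
  (forall a u, 0 < a -> K u -> K (a *: u)) ->
  (forall k, K k -> 0 <= P k) ->
  exists mu : {scalar U}, (forall u, mu u <= P u) /\ forall k, K k -> 0 <= mu k.
Proof.
move=> sP K0 KD KZ PK.
pose Pk k u := P (u + k).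
have lb u : exists b, forall k, K k -> b <= Pk k u.
  exists (- P (- u)) => k Kk; have := sublinearD sP (u + k) (- u); rewrite /Pk.
  rewrite addrC addKr; have := PK _ Kk; lra.
have sq : sublinear (fun u => inf [set P (u + k) | k in K]).
  apply: (sublinear_inf_family (p := Pk)) => //; first by exists 0.
    move=> k1 k2 u v K1 K2; exists (k1 + k2); first exact: KD.
    by rewrite /Pk addrACA; exact: sublinearD.
  move=> a k a0 Kk; exists (a *: k); first exact: KZ.
  by move=> u; rewrite /Pk -scalerDr sublinearZ.
have [mu muq] := hahn_banach sq; exists mu; split => [u | k Kk].
  apply: le_trans (muq u) _.
  by have := inf_family_le (p := Pk) lb u K0; rewrite /Pk addr0.
have := le_trans (muq (- k)) (inf_family_le (p := Pk) lb (- k) Kk).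
by rewrite /Pk addNr sublinear0 // linearN oppr_le0.
Qed.

Section conic_span.
Variables (X : Type) (g : X -> U).

Definition conic_span : set U :=
  [set \sum_(c <- s) c.1 *: g c.2 | s in [set s | all (fun c => 0 <= c.1) s]].

Lemma conic_span0 : conic_span 0.
Proof. by exists [::]; rewrite ?big_nil. Qed.

Lemma conic_span_gen x : conic_span (g x).
Proof. by exists [:: (1, x)]; rewrite /= ?ler01 // big_seq1 scale1r. Qed.

Lemma conic_spanD u v : conic_span u -> conic_span v -> conic_span (u + v).
Proof.
move=> [s1 s10 <-] [s2 s20 <-]; exists (s1 ++ s2); last by rewrite big_cat.
by rewrite /= all_cat; apply/andP.
Qed.

Lemma conic_spanZ a u : 0 <= a -> conic_span u -> conic_span (a *: u).
Proof.
move=> a0 [s s0 <-]; exists [seq (a * c.1, c.2) | c <- s].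
  by rewrite /= all_map; apply: sub_all s0 => c /= c0; rewrite mulr_ge0.
by rewrite big_map scaler_sumr; apply: eq_bigr => c _; rewrite scalerA.
Qed.

Lemma sublinear_conic_span_ge0 (P : U -> R) : sublinear P ->
  (forall n (t : 'I_n -> R) (xs : 'I_n -> X), (0 < n)%N ->
     (forall j, 0 <= t j) -> \sum_(j < n) t j = 1 ->
     0 <= P (\sum_(j < n) t j *: g (xs j))) ->
  forall k, conic_span k -> 0 <= P k.
Proof.
move=> sP Pconv _ [[|d s'] s0 <-]; first by rewrite big_nil sublinear0.
set s := d :: s' in s0 *.
pose t (j : 'I_(size s)) := (nth d s j).1.
pose xs (j : 'I_(size s)) := (nth d s j).2.
have t0 j : 0 <= t j by move/(all_nthP d): s0 => /(_ j (ltn_ord j)).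
have -> : \sum_(c <- s) c.1 *: g c.2 = \sum_(j < size s) t j *: g (xs j).
  by rewrite (big_nth d) big_mkord.
have [S0|] := eqVneq (\sum_(j < size s) t j) 0.
  rewrite big1 ?sublinear0 // => j _.
  by rewrite (psumr_eq0P (fun j _ => t0 j) S0) ?scale0r.
rewrite psumr_neq0 => [/hasP[j _ /andP[_ tj]]|j _ //].
set S := \sum_(j < size s) t j.
have S0 : 0 < S.
  by apply: lt_le_trans tj _; rewrite /S (bigD1 j) //= lerDl sumr_ge0.
rewrite -[X in P X](scalerKV (lt0r_neq0 S0)) sublinearZ // scaler_sumr.
under eq_bigr do rewrite scalerA.
apply: mulr_ge0; first exact: ltW.
apply: (Pconv _ (fun i => S^-1 * t i)) => // [i|].
  by rewrite mulr_ge0 // invr_ge0 ltW.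
by rewrite -mulr_sumr mulVf ?lt0r_neq0.
Qed.

End conic_span.
End sublinear.

Section bounded_functions.
Variables (R : realType) (T : Type).

Lemma is_boundedD (u v : T -> R) :
  is_bounded u -> is_bounded v -> is_bounded (u \+ v).
Proof.
move=> [M hM] [N hN]; exists (M + N) => t /=.
by apply: le_trans (ler_normD _ _) _; apply: lerD.
Qed.

Lemma is_boundedZ a (u : T -> R) :
  is_bounded u -> is_bounded (fun t => a * u t).
Proof. by move=> [M hM]; exists (`|a| * M) => t; rewrite normrM ler_wpM2l. Qed.

Definition bounded_fun : {pred T -> R^o} := fun u => `[< is_bounded u >].

Lemma bounded_fun_submod_closed : submod_closed bounded_fun.
Proof.
split=> [|a u v /asboolP bu /asboolP bv]; apply/asboolP.
  by exists 0 => t; rewrite normr0.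
exact/is_boundedD/bv/is_boundedZ.
Qed.

HB.instance Definition _ :=
  GRing.isSubmodClosed.Build R (T -> R^o) bounded_fun bounded_fun_submod_closed.

Record bfun := BFun { bval :> T -> R^o; bvalP : bval \in bounded_fun }.
HB.instance Definition _ := [isSub for bval].
HB.instance Definition _ := [Choice of bfun by <:].
HB.instance Definition _ := [SubChoice_isSubLmodule of bfun by <:].

Lemma bfunP (u v : bfun) : (forall t, u t = v t) -> u = v.
Proof. by move=> uv; apply: val_inj; apply/funext. Qed.

Lemma bfunD (u v : bfun) t : (u + v) t = u t + v t. Proof. by []. Qed.

Lemma bfunZ a (u : bfun) t : (a *: u) t = a * u t. Proof. by []. Qed.

(* Junk value: [bfun_of u = 0] when [u] is unbounded. *)
Definition bfun_of (u : T -> R) : bfun := insubd 0 u.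

Lemma bfun_ofE u t : is_bounded u -> bfun_of u t = u t.
Proof. by move=> bu; rewrite /bfun_of val_insubd ifT //; apply/asboolP. Qed.

Lemma bfun_sumE (I : Type) (r : seq I) (G : I -> bfun) t :
  (\sum_(i <- r) G i) t = \sum_(i <- r) G i t.
Proof.
have /(congr1 (fun h => h t)) := raddf_sum (\val : bfun -> T -> R^o) r xpredT G.
by rewrite fct_sumE.
Qed.

Definition bsup (v : bfun) : R := sup (range v).

Let bsup_ubound (v : bfun) : has_ubound (range v).
Proof.
have /asboolP[M hM] := bvalP v.
by exists M => _ [t _ <-]; exact: le_trans (ler_norm _) (hM t).
Qed.

Lemma bsup_ub (v : bfun) t : v t <= bsup v.
Proof. by apply: ub_le_sup; [exact: bsup_ubound | exists t]. Qed.

Variable t0 : T.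

Lemma bsup_le (v : bfun) c : (forall t, v t <= c) -> bsup v <= c.
Proof.
by move=> vc; apply: ge_sup; [exists (v t0), t0 | move=> _ [t _ <-]].
Qed.

Lemma sublinear_bsup : sublinear bsup.
Proof.
split=> [u v|a u a0].
  by apply: bsup_le => t; apply: lerD; exact: bsup_ub.
apply/le_anti/andP; split.
  by apply: bsup_le => t; rewrite /= ler_pM2l //; exact: bsup_ub.
rewrite -ler_pdivlMl //; apply: bsup_le => t; rewrite ler_pdivlMl //.
exact: (bsup_ub (a *: u)).
Qed.

Lemma esupr_bfun (v : bfun) : esupr v = (bsup v)%:E.
Proof.
by rewrite /esupr -(image_comp v EFin) ereal_sup_EFin //; exists (v t0), t0.
Qed.

Lemma scalar_le_bsup_ge (phi : {scalar bfun}) (v : bfun) c :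
  (forall w, phi w <= bsup w) -> (forall t, c <= v t) -> c <= phi v.
Proof.
move=> phi_le cv; rewrite -[v]opprK linearN lerNr.
by apply: le_trans (phi_le _) (bsup_le _) => t /=; rewrite lerN2.
Qed.

End bounded_functions.

Section esup_einf.
Variable R : realType.

Lemma einf_on_attained (X : Type) (A : set X) (h : X -> R) x : A x ->
  (h x)%:E = einf_on A h <-> forall y, A y -> h x <= h y.
Proof.
move=> Ax; split=> [hx y Ay|hx].
  by rewrite -lee_fin hx; apply: ereal_inf_lbound; exists y.
apply/le_anti/andP; split; last by apply: ereal_inf_lbound; exists x.
by apply: le_ereal_inf_tmp => _ [y Ay <-]; rewrite lee_fin; exact: hx.
Qed.

Lemma esupr_lt0 (I : Type) (g : I -> R) : (esupr g < 0)%E ->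
  exists2 e, 0 < e & forall i, g i <= - e.
Proof.
have ub i : ((g i)%:E <= esupr g)%E by apply: ereal_sup_ubound; exists i.
case: (esupr g) ub => [r| |] ub //; last by exists 1 => // i; have := ub i.
rewrite lte_fin => r0; exists (- r) => [|i]; first by rewrite oppr_gt0.
by rewrite opprK -lee_fin.
Qed.

End esup_einf.

Section embedding.
Variables (R : realType) (L : Type).
Local Notation U := (bfun R (option L)).

(* l^oo(L) x R is identified with l^oo(option L), [None] being the objective
   coordinate: (u, r) is [ext_bfun u + r *: obj_bfun]. *)
Definition ext_bfun (u : L -> R) : U :=
  bfun_of (fun i => if i is Some l then u l else 0).
Definition obj_bfun : U := bfun_of (fun i => if i is Some _ then 0 else 1).

Lemma is_bounded_ext (u : L -> R) : is_bounded u ->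
  is_bounded (fun i : option L => if i is Some l then u l else 0).
Proof.
move=> [M hM]; exists (Num.max M 0) => -[l|].
  by rewrite le_max hM.
by rewrite normr0 le_max lexx orbT.
Qed.

Lemma ext_bfunE (u : L -> R) i : is_bounded u ->
  ext_bfun u i = if i is Some l then u l else 0.
Proof. by move=> bu; rewrite bfun_ofE //; exact: is_bounded_ext. Qed.

Lemma obj_bfunE i : obj_bfun i = if i is Some _ then 0 else 1.
Proof.
by rewrite bfun_ofE //; exists 1 => -[l|]; rewrite ?normr0 ?normr1 ?ler01.
Qed.

Lemma ext_bfunD (u v : L -> R) : is_bounded u -> is_bounded v ->
  ext_bfun (u \+ v) = ext_bfun u + ext_bfun v.
Proof.
move=> bu bv; apply: bfunP => i.
rewrite bfunD !ext_bfunE //; last exact: is_boundedD.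
by case: i => [l|]; rewrite ?addr0.
Qed.

Lemma ext_bfunZ a (u : L -> R) : is_bounded u ->
  ext_bfun (fun l => a * u l) = a *: ext_bfun u.
Proof.
move=> bu; apply: bfunP => i.
rewrite bfunZ !ext_bfunE //; last exact: is_boundedZ.
by case: i => [l|]; rewrite ?mulr0.
Qed.

Lemma pos_functional_le0 (Phi : (L -> R) -> R) u :
  pos_cont_lin_functional Phi ->
  is_bounded u -> (forall l, u l <= 0) -> Phi u <= 0.
Proof.
move=> [_ PhiZ Phi_ge0 _] bu u_le0.
have := Phi_ge0 _ (is_boundedZ (-1) bu); rewrite PhiZ // mulN1r oppr_ge0; apply.
by move=> l; rewrite mulN1r oppr_ge0.
Qed.

Section multiplier.
Variable phi : {scalar U}.
Hypothesis phi_le : forall u, phi u <= bsup u.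
Hypothesis obj_gt0 : 0 < phi obj_bfun.

Definition multiplier (u : L -> R) : R := phi (ext_bfun u) / phi obj_bfun.

Lemma multiplier_pos_cont_lin (l0 : L) : pos_cont_lin_functional multiplier.
Proof.
rewrite /multiplier; split.
- by move=> u v bu bv; rewrite ext_bfunD // linearD mulrDl.
- by move=> a u bu; rewrite ext_bfunZ // linearZ mulrA.
- move=> u bu u_ge0; apply: divr_ge0; last exact: ltW.
  by apply: (scalar_le_bsup_ge None phi_le) => i; rewrite ext_bfunE //; case: i.
exists (phi obj_bfun)^-1 => u M bu uM.
rewrite normrM [`|_^-1|]gtr0_norm ?invr_gt0 // mulrC ler_pM2l ?invr_gt0 //.
have M0 : 0 <= M by apply: le_trans (uM l0).
rewrite ler_norml; apply/andP; split.
  apply: (scalar_le_bsup_ge None phi_le) => -[l|]; rewrite ext_bfunE //.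
    by have := uM l; rewrite ler_norml => /andP[].
  by rewrite oppr_le0.
apply: le_trans (phi_le _) (bsup_le None _) => -[l|]; rewrite ext_bfunE //.
exact: le_trans (ler_norm _) (uM l).
Qed.

End multiplier.
End embedding.

Arguments obj_bfun {R L}.

Section lagrange.
Variables (R : realType) (X L : Type) (x0 : X) (f : X -> R) (F : L -> X -> R).

Lemma feasibleP x : feasible F x <-> forall l, F l x <= 0.
Proof.
split=> [Fx l|Fx]; last by apply: ge_ereal_sup => _ [l _ <-]; rewrite lee_fin.
by rewrite -lee_fin; apply: le_trans Fx; apply: ereal_sup_ubound; exists l.
Qed.

Hypothesis F_bounded : forall x, is_bounded (F^~ x).

Lemma multiplier_sufficient (Phi : (L -> R) -> R) :
  pos_cont_lin_functional Phi ->
  (forall x, f x0 + Phi (F^~ x0) <= f x + Phi (F^~ x)) -> Phi (F^~ x0) = 0 ->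
  forall x, feasible F x -> f x0 <= f x.
Proof.
move=> Phi_pcl lagrange Phi_x0 x /feasibleP Fx.
have := lagrange x; have := pos_functional_le0 Phi_pcl (F_bounded x) Fx.
rewrite Phi_x0; lra.
Qed.

Local Notation U := (bfun R (option L)).

Definition join_bfun x : U := bfun_of (join_family F f x0 ^~ x).

Lemma join_bfunE x i : join_bfun x i = join_family F f x0 i x.
Proof.
rewrite bfun_ofE //; have [M hM] := F_bounded x.
exists (Num.max M `|f x - f x0|) => -[l|] /=; first by rewrite le_max hM.
by rewrite le_max lexx orbT.
Qed.

Lemma join_bfun_decomp x :
  join_bfun x = ext_bfun (F^~ x) + (f x - f x0) *: obj_bfun.
Proof.
apply: bfunP => i; rewrite bfunD bfunZ join_bfunE ext_bfunE // obj_bfunE.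
by case: i => [l|] /=; rewrite ?mulr0 ?addr0 ?mulr1 ?add0r.
Qed.

Section separation.
Hypothesis convex : infsup_convex (join_family F f x0).
Hypothesis x0_optimal : forall x, feasible F x -> f x0 <= f x.

Lemma esupr_join_ge0 x : (0 <= esupr (join_family F f x0 ^~ x))%E.
Proof.
have [i join_ge0] : exists i, 0 <= join_family F f x0 i x.
  have [[l Fl]|Fx] := pselect (exists l, 0 < F l x).
    by exists (Some l); exact: ltW.
  exists None; rewrite /= subr_ge0; apply/x0_optimal/feasibleP => l.
  by rewrite leNgt; apply/negP => Fl; apply: Fx; exists l.
apply: le_trans (ereal_sup_ubound _); last by exists i.
by rewrite lee_fin.
Qed.

Lemma bsup_conic_join_ge0 k : conic_span join_bfun k -> 0 <= bsup k.
Proof.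
apply: sublinear_conic_span_ge0 (sublinear_bsup R None) _ k => n t xs n0 t0 t1.
rewrite -lee_fin -(esupr_bfun None).
have -> : bval (\sum_(j < n) t j *: join_bfun (xs j)) =
    fun i => \sum_(j < n) t j * join_family F f x0 i (xs j).
  apply/funext => i; rewrite bfun_sumE.
  by apply: eq_bigr => j _; rewrite bfunZ join_bfunE.
apply: le_trans (convex xs n0 t0 t1).
by apply: le_ereal_inf_tmp => _ [x _ <-]; exact: esupr_join_ge0.
Qed.

Lemma exists_separating_scalar : exists phi : {scalar U},
  (forall u, phi u <= bsup u) /\ forall x, 0 <= phi (join_bfun x).
Proof.
have [phi [phi_le phi_ge0]] := hahn_banach_cone (sublinear_bsup R None)
  (conic_span0 join_bfun) (@conic_spanD _ _ _ join_bfun)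
  (fun a u a0 => conic_spanZ (ltW a0)) bsup_conic_join_ge0.
by exists phi; split=> // x; apply/phi_ge0/conic_span_gen.
Qed.

End separation.

Section slater.
Variable phi : {scalar U}.
Hypothesis phi_le : forall u, phi u <= bsup u.
Hypothesis phi_join_ge0 : forall x, 0 <= phi (join_bfun x).

Lemma phi_obj_gt0 : (exists x1, (esupr (F^~ x1) < 0)%E) -> 0 < phi obj_bfun.
Proof.
move=> [x1 /esupr_lt0[e e0 Fe]]; set t := phi obj_bfun.
have t_ge0 : 0 <= t.
  by apply: (scalar_le_bsup_ge None phi_le) => i; rewrite obj_bfunE; case: i.
have one_le : 1 <= phi (ext_bfun (fun=> 1)) + t.
  rewrite -linearD; apply: (scalar_le_bsup_ge None phi_le) => i.
  rewrite bfunD ext_bfunE ?obj_bfunE; last by exists 1 => _; rewrite normr1.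
  by case: i => [l|]; rewrite ?addr0 ?add0r.
have ext_le : phi (ext_bfun (F^~ x1)) + e * phi (ext_bfun (fun=> 1)) <= 0.
  rewrite -linearZ -linearD; apply: le_trans (phi_le _) (bsup_le None _) => i.
  rewrite bfunD bfunZ !ext_bfunE //; last by exists 1 => _; rewrite normr1.
  by case: i => [l|]; rewrite ?mulr0 ?addr0 // mulr1 -lerBrDr sub0r.
(* If t = 0, then 0 <= phi (ext_bfun (F^~ x1)) <= - e. *)
have := phi_join_ge0 x1; rewrite join_bfun_decomp linearD linearZ /= -/t.
rewrite lt_def t_ge0 andbT; apply: contraTN => /eqP t_eq0.
by rewrite t_eq0 in one_le *; rewrite -ltNge; nra.
Qed.

Hypothesis obj_gt0 : 0 < phi obj_bfun.

Lemma lagrangian_ge x : f x0 <= f x + multiplier phi (F^~ x).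
Proof.
have := phi_join_ge0 x; rewrite join_bfun_decomp linearD linearZ /= /multiplier.
set t := phi obj_bfun; set p := phi _ => h.
have -> : f x + p / t = f x0 + (p + (f x - f x0) * t) / t.
  by field; exact: lt0r_neq0.
by rewrite lerDl divr_ge0 // ltW.
Qed.

Lemma multiplier_x0 : feasible F x0 -> multiplier phi (F^~ x0) = 0.
Proof.
move=> /feasibleP Fx0; apply/le_anti/andP; split; last first.
  by have := lagrangian_ge x0; lra.
rewrite /multiplier pmulr_lle0 ?invr_gt0 //.
apply: le_trans (phi_le _) (bsup_le None _) => i.
by rewrite ext_bfunE //; case: i.
Qed.

End slater.
End lagrange.

Unset Implicit Arguments.

Theorem theorem4p4 (R : realType) (X L : Type) (x0 : X) (f : X -> R)
    (F : L -> X -> R) :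
  (exists x : X, True) -> (exists l : L, True) ->
  feasible F !=set0 ->
  (forall x, is_bounded (fun l => F l x)) ->
  infsup_convex (join_family F f x0) ->
  (exists x1 : X, (esupr (fun l => F l x1) < 0)%E) ->
  ((x0 \in feasible F /\ (f x0)%:E = einf_on (feasible F) f) <->
   (x0 \in feasible F /\
    exists Phi0 : (L -> R) -> R,
      [/\ pos_cont_lin_functional Phi0,
          ((f x0 + Phi0 (fun l => F l x0))%:E
             = einf_on [set: X] (fun x => f x + Phi0 (fun l => F l x))) &
          Phi0 (fun l => F l x0) = 0])).
Proof.
move=> _ [l0 _] _ F_bounded convex slater.
split=> -[x0F]; have Fx0 : feasible F x0 by rewrite inE in x0F.
  move=> /(einf_on_attained _ Fx0) x0_optimal; split=> //.
  have [phi [phi_le phi_join_ge0]] :=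
    exists_separating_scalar F_bounded convex x0_optimal.
  have obj_gt0 := phi_obj_gt0 F_bounded phi_le phi_join_ge0 slater.
  have lagrange := lagrangian_ge F_bounded phi_join_ge0 obj_gt0.
  have mult_x0 := multiplier_x0 F_bounded phi_le phi_join_ge0 obj_gt0 Fx0.
  exists (multiplier phi); split=> //; first exact: multiplier_pos_cont_lin.
  pose h x := f x + multiplier phi (F^~ x).
  apply/(einf_on_attained h (I : [set: X] x0)) => x _.
  by rewrite /h mult_x0 addr0.
move=> [Phi0 [Phi0_pcl + Phi0_x0]]; pose h x := f x + Phi0 (F^~ x).
move=> /(einf_on_attained h (I : [set: X] x0)) lagrange.
split=> //; apply/(einf_on_attained _ Fx0).
by apply: (multiplier_sufficient F_bounded Phi0_pcl) => // x; exact: lagrange.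
Qed.
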